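(* Let $\ell$ be divisible by $4$, let $\mathcal{X}=(X,X')$, $\mathcal{Y}=(Y,Y')$ be perfect colored matchings (for $r=2$) with $X=(x_0,\dots,x_{\ell/2-1})$, $X'=(x'_0,\dots)$, $Y=(y_0,\dots)$, $Y'=(y'_0,\dots)$, and let $\lambda_x,\lambda_y\in\mathbb{F}_q^*$ satisfy: (B1) $\lambda_x\ne\lambda_y$; (B2) $\mathcal{X}$ and $\mathcal{Y}$ satisfy the pairing condition; (B3) if $\lambda_x=-\lambda_y$, then for every $i\in\{0,\dots,\ell/2-1\}$: if $(x_i,x'_i)=(y_j,y_t)$ then $i\le\ell/4-1$, $j\le\ell/4-1$ and $t>\ell/4-1$; and if $(x_i,x'_i)=(y'_j,y'_t)$ then $i>\ell/4-1$, $j\le\ell/4-1$ and $t>\ell/4-1$. Then the family $\{(A_X(\lambda_x),S_X),(A_{X'}(\lambda_x),S_{X'}),(A_Y(\lambda_y),S_Y),(A_{Y'}(\lambda_y),S_{Y'})\}$ satisfies the subspace condition with $r=2$.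
   Context: Vectors are row vectors and matrices act on the right. Subspace condition for $r,\ell$: a family $\{(A_i,S_i)\}_{i=1}^k$ of invertible $\ell\times\ell$ matrices and $(\ell/r)$-dimensional subspaces satisfies it if (i) $S_i+S_iA_i+\dots+S_iA_i^{r-1}=\mathbb{F}_q^\ell$ for all $i$; (ii) $S_iA_j=S_i$ for all $i\ne j$; (iii) every square block submatrix of the $k\times r$ block matrix with $(i,j)$ block $A_i^j$ ($j=0,\dots,r-1$) is invertible. A perfect colored matching for $r=2$ is a pair $\mathcal{Z}=(Z,Z')$ of ordered sequences $Z=(z_0,\dots,z_{\ell/2-1})$, $Z'=(z'_0,\dots,z'_{\ell/2-1})$ of standard unit vectors of $\mathbb{F}_q^\ell$ whose underlying sets partition $\{e_0,\dots,e_{\ell-1}\}$; its edges are $\{z_i,z'_i\}$. Two matchings satisfy the pairing condition if every edge of each is contained in a single color class ($Z$ or $Z'$) of the other. $A(\lambda)=\mathrm{diag}(A^+(\lambda),-A^+(\lambda))$ where $A^+(\lambda)$ is the $(\ell/2)\times(\ell/2)$ block diagonal matrix with all $2\times2$ blocks $\begin{pmatrix}0&\lambda\\ \lambda&0\end{pmatrix}$. $P_Z$ has rows $z_0,z'_0-z_0,z_1,z'_1-z_1,\dots$ and $P_{Z'}$ has rows $z'_0,z_0+z'_0,z'_1,z_1+z'_1,\dots$; $A_Z(\lambda)=P_Z^{-1}A(\lambda)P_Z$, $A_{Z'}(\lambda)=P_{Z'}^{-1}A(\lambda)P_{Z'}$, $S_Z=\mathrm{span}\{z_i\}$, $S_{Z'}=\mathrm{span}\{z'_i\}$.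 *)

From HB Require Import structures.
From mathcomp Require Import all_boot all_order all_algebra.
Set Implicit Arguments. Unset Strict Implicit. Unset Printing Implicit Defensive.
Import Order.TTheory GRing.Theory Num.Theory.
Local Open Scope ring_scope.

(* Conventions: the half-length l/2 is called h, so vectors live in F^(h+h).
   Standard unit vectors e_j are indexed by j : 'I_(h+h); a sequence of
   standard unit vectors (z_0,...,z_(h-1)) is encoded by z : 'I_h -> 'I_(h+h). *)

Definition uvec (F : fieldType) (l : nat) (j : 'I_l) : 'rV[F]_l := delta_mx 0 j.

Lemma half_ord_lt (h : nat) (k : 'I_(h + h)) : (k./2 < h)%N.
Proof. by rewrite ltn_half_double -addnn. Qed.

Definition half_ord (h : nat) (k : 'I_(h + h)) : 'I_h := Ordinal (half_ord_lt k).

Definition perfect_colored_matching (h : nat) (z z' : 'I_h -> 'I_(h + h)) : Prop :=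
  [set z i | i : 'I_h] :&: [set z' i | i : 'I_h] = set0 /\
  [set z i | i : 'I_h] :|: [set z' i | i : 'I_h] = setT.

Definition edges_in_classes (h : nat) (z z' w w' : 'I_h -> 'I_(h + h)) : Prop :=
  forall i : 'I_h,
    (z i \in [set w j | j : 'I_h] /\ z' i \in [set w j | j : 'I_h]) \/
    (z i \in [set w' j | j : 'I_h] /\ z' i \in [set w' j | j : 'I_h]).

Definition pairing_condition (h : nat) (x x' y y' : 'I_h -> 'I_(h + h)) : Prop :=
  edges_in_classes x x' y y' /\ edges_in_classes y y' x x'.

(* A^+(lambda): h x h block diagonal with 2x2 blocks [[0, lambda], [lambda, 0]],
   i.e. entries (2a, 2a+1) and (2a+1, 2a) equal lambda, all others 0. *)
Definition Aplus (F : fieldType) (h : nat) (lam : F) : 'M[F]_h :=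
  \matrix_(i, j) (if ((i./2 == j./2)%N && (i != j)) then lam else 0).

Definition Amat (F : fieldType) (h : nat) (lam : F) : 'M[F]_(h + h) :=
  block_mx (Aplus h lam) 0 0 (- Aplus h lam).

Definition PZ (F : fieldType) (h : nat) (z z' : 'I_h -> 'I_(h + h)) : 'M[F]_(h + h) :=
  \matrix_(k < h + h)
    (if odd k then uvec F (z' (half_ord k)) - uvec F (z (half_ord k))
     else uvec F (z (half_ord k))).

Definition PZ' (F : fieldType) (h : nat) (z z' : 'I_h -> 'I_(h + h)) : 'M[F]_(h + h) :=
  \matrix_(k < h + h)
    (if odd k then uvec F (z (half_ord k)) + uvec F (z' (half_ord k))
     else uvec F (z' (half_ord k))).

Definition AZ (F : fieldType) (h : nat) (lam : F) (z z' : 'I_h -> 'I_(h + h))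
  : 'M[F]_(h + h) := invmx (PZ F z z') *m Amat h lam *m PZ F z z'.

Definition AZ' (F : fieldType) (h : nat) (lam : F) (z z' : 'I_h -> 'I_(h + h))
  : 'M[F]_(h + h) := invmx (PZ' F z z') *m Amat h lam *m PZ' F z z'.

Definition SZ (F : fieldType) (h : nat) (z : 'I_h -> 'I_(h + h)) : 'M[F]_(h, h + h) :=
  \matrix_(i < h) uvec F (z i).

(* Subspace condition for r, l.  Subspaces are represented as row spaces of
   matrices S i (with s rows); S A is the row space of S *m A. *)
Definition subspace_condition (F : fieldType) (r l k s : nat)
    (A : 'I_k -> 'M[F]_l) (S : 'I_k -> 'M[F]_(s, l)) : Prop :=
  [/\ forall i, A i \in unitmx,
      forall i, \rank (S i) = (l %/ r)%N,
      forall i, (\sum_(j < r) <<S i *m A i ^+ j>> == 1%:M)%MS,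
      forall i j, i != j -> (S i *m A j == S i)%MS &
      forall (t : nat) (rho : 'I_t -> 'I_k) (gam : 'I_t -> 'I_r),
        (forall a b : 'I_t, (a < b)%N -> (rho a < rho b)%N) ->
        (forall a b : 'I_t, (a < b)%N -> (gam a < gam b)%N) ->
        @mxblock F t t (fun _ => l) (fun _ => l)
          (fun a b => A (rho a) ^+ gam b) \in unitmx].

From HB Require Import structures.
From mathcomp Require Import all_boot all_order all_algebra.
From mathcomp Require Import ring zify.
Set Implicit Arguments. Unset Strict Implicit. Unset Printing Implicit Defensive.
Import Order.TTheory GRing.Theory Num.Theory.
Local Open Scope ring_scope.

(* Conjugating A(lambda) by P_X shows that A_X := A_X(lambda_x) sends e_(x_i)
   to c_i (e_(x'_i) - e_(x_i)) and e_(x'_i) to c_i e_(x'_i), where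
   c_i = +-lambda_x is the entry of the i-th 2x2 block of A(lambda), and that
   A_X' is the transpose of A_X.  Hence S_X + S_X A_X is the whole space, and
   S_Y is invariant under A_X as soon as every edge of X lies inside Y or Y'.
   For r = 2, condition (iii) reduces to the invertibility of A_j - A_i for
   i < j; the kernel of such a difference is computed edge by edge, each edge
   giving a triangular 2x2 system whose pivots are sums or differences of
   +-lambda_x and +-lambda_y, nonzero by (B1) and, when lambda_x = -lambda_y,
   by (B3). *)

Section SubspaceConditionTwo.
Variable F : fieldType.

Lemma unitmx_castmx n1 n2 (e1 e2 : n1 = n2) (A : 'M[F]_n1) :
  (castmx (e1, e2) A \in unitmx) = (A \in unitmx).
Proof.
move: e2; case: n2 / e1 => e2.
by rewrite (eq_irrelevance e2 (erefl n1)) castmx_id.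
Qed.

Lemma unitmx_block_castmx s n (e : s = n) (A : 'M[F]_n) (B : 'M[F]_(n, s))
    (C : 'M[F]_(s, n)) (D : 'M[F]_s) :
  (block_mx A B C D \in unitmx) =
  (block_mx A (castmx (erefl, e) B) (castmx (e, erefl) C) (castmx (e, e) D) \in unitmx).
Proof. by case: n / e A B C D => A B C D; rewrite !castmx_id. Qed.

Lemma row_inj_unitmx n (D : 'M[F]_n) :
  (forall v : 'rV[F]_n, v *m D = 0 -> v = 0) -> D \in unitmx.
Proof.
move=> D_inj; rewrite -row_free_unit -kermx_eq0; apply/eqP/row_matrixP => i.
by rewrite row0; apply: D_inj; rewrite -row_mul mulmx_ker row0.
Qed.

Lemma mul_eq0_cancel (k z x y : F) : k != 0 -> k * z = x - y -> x = y -> z = 0.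
Proof.
move=> k0 kz xy; apply/eqP; move: kz; rewrite xy subrr => /eqP.
by rewrite mulf_eq0 (negbTE k0).
Qed.

Variable l : nat.

Lemma mxblock0_unit (B : 'I_0 -> 'I_0 -> 'M[F]_l) :
  @mxblock F 0 0 (fun _ => l) (fun _ => l) B \in unitmx.
Proof.
have e : (\sum_(i < 0) l = 0)%N by rewrite big_ord0.
by rewrite -(unitmx_castmx e e) unitmxE det_mx00 unitr1.
Qed.

Lemma mxblock1_unit (B : 'I_1 -> 'I_1 -> 'M[F]_l) :
  B ord0 ord0 \in unitmx -> @mxblock F 1 1 (fun _ => l) (fun _ => l) B \in unitmx.
Proof.
move=> B_unit.
rewrite (@eq_mxblock _ _ _ _ _ B (fun _ _ => B ord0 ord0)); last by move=> i j; rewrite !ord1.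
have e : (\sum_(i < 1) l = l)%N by rewrite big_ord1.
by rewrite -(unitmx_castmx e e) (eq_castmx _ (big_ord1 _ _, big_ord1 _ _)) -mxEmxblock.
Qed.

Lemma mxblock2_unit (B : 'I_2 -> 'I_2 -> 'M[F]_l) :
  block_mx (B 0 0) (B 0 1) (B 1 0) (B 1 1) \in unitmx ->
  @mxblock F 2 2 (fun _ => l) (fun _ => l) B \in unitmx.
Proof.
move=> B_unit; rewrite mxblock_recul unitmx_castmx.
rewrite (unitmx_block_castmx (big_ord1 _ (fun=> l))).
have lift0 : lift 0 (0 : 'I_1) = 1 :> 'I_2 by apply/val_inj.
rewrite (eq_mxrow (B_ := fun _ => B 0 1)); last by move=> j; rewrite ord1 lift0.
rewrite (eq_mxcol (B_ := fun _ => B 1 0)); last by move=> j; rewrite ord1 lift0.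
rewrite (eq_mxblock (B_ := fun _ _ => B 1 1)); last by move=> i j; rewrite !ord1 lift0.
by rewrite -mxEmxrow -mxEmxcol (eq_castmx _ (big_ord1 _ _, big_ord1 _ _)) -mxEmxblock.
Qed.

Lemma block_mx11_unit (A B : 'M[F]_l) :
  B - A \in unitmx -> block_mx 1%:M A 1%:M B \in unitmx.
Proof.
have -> : block_mx 1%:M A 1%:M B = block_mx 1%:M 0 1%:M 1%:M *m block_mx 1%:M A 0 (B - A).
  by rewrite mulmx_block !mul1mx !mul0mx !addr0 addrC subrK.
by rewrite unitmx_mul !unitmxE det_lblock det_ublock !det1 !mul1r unitr1 -unitmxE.
Qed.

(* For r = 2 the block condition (iii) only involves blocks of size at most
   two, namely [[1, A i], [1, A j]], whose invertibility reduces to that of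
   A j - A i. *)
Lemma subspace_condition2 k s (A : 'I_k -> 'M[F]_l) (S : 'I_k -> 'M[F]_(s, l)) :
  (forall i, A i \in unitmx) ->
  (forall i, \rank (S i) = (l %/ 2)%N) ->
  (forall i, (S i + S i *m A i == 1%:M)%MS) ->
  (forall i j, i != j -> (S i *m A j == S i)%MS) ->
  (forall i j : 'I_k, (i < j)%N -> A j - A i \in unitmx) ->
  subspace_condition 2 A S.
Proof.
move=> A_unit S_rank S_span S_stable A_sub_unit.
split=> // [i|t rho gam rho_lt gam_lt].
  rewrite !big_ord_recl big_ord0 /= expr0 expr1 mulmx1.
  by rewrite !(adds_eqmx (genmxE _) (eqmx_trans (addsmx0 _ _) (genmxE _))) S_span.
case: t rho gam rho_lt gam_lt => [|[|[|t]]] rho gam rho_lt gam_lt.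
- exact: mxblock0_unit.
- by apply: mxblock1_unit; case: (gam ord0) => [[|[|g]] ?] //=; rewrite ?expr0 ?expr1 ?unitmx1.
- apply: mxblock2_unit => /=.
  have gam01 := gam_lt 0 1 isT; have gam1 := ltn_ord (gam 1).
  have -> : (gam 0 : nat) = 0%N by lia.
  have -> : (gam 1 : nat) = 1%N by lia.
  by rewrite !expr0 !expr1 block_mx11_unit // A_sub_unit // rho_lt.
- have := gam_lt (inord 0) (inord 1); have := gam_lt (inord 1) (inord 2).
  by have := ltn_ord (gam (inord 2)); rewrite !inordK //; lia.
Qed.

End SubspaceConditionTwo.

Section MatchingMatrix.
Variables (F : fieldType) (h : nat).
Local Notation n := (h + h)%N.
Implicit Types (p q r s z : 'I_h -> 'I_n) (c d : 'I_h -> F) (al : F).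

Record matching p q : Prop := Matching {
  matching_injl : injective p;
  matching_injr : injective q;
  matching_disj : forall a b, p a != q b;
  matching_cover : forall u, (exists a, p a = u) \/ (exists a, q a = u) }.

Lemma matching_sym p q : matching p q -> matching q p.
Proof.
case=> p_inj q_inj pq_disj pq_cover; split=> // [a b|u]; first by rewrite eq_sym.
by case: (pq_cover u); [right|left].
Qed.

Lemma matching_ind p q (P : 'I_n -> Prop) : matching p q ->
  (forall a, P (p a)) -> (forall a, P (q a)) -> forall u, P u.
Proof. by move=> pq Pp Pq u; case: (matching_cover pq u) => -[a <-]. Qed.

Lemma matching_rowP p q (v : 'rV[F]_n) : matching p q ->
  (forall a, v 0 (p a) = 0) -> (forall a, v 0 (q a) = 0) -> v = 0.
Proof.
move=> pq vp vq; apply/rowP => u; rewrite mxE.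
by apply: (matching_ind (P := fun u => v 0 u = 0) pq).
Qed.

Lemma perfect_colored_matching_matching p q :
  perfect_colored_matching p q -> matching p q.
Proof.
case=> pq_disj pq_cover.
have card_im (z : 'I_h -> 'I_(h + h)) : (#|[set z i | i : 'I_h]| <= h)%N.
  by rewrite (leq_trans (leq_imset_card _ _)) // card_ord.
have := cardsU [set p i | i : 'I_h] [set q i | i : 'I_h].
rewrite pq_cover pq_disj cards0 subn0 cardsT card_ord => card_n.
have inj_im (z : 'I_h -> 'I_(h + h)) : #|[set z i | i : 'I_h]| = h -> injective z.
  move=> card_z a b.
  have /imset_injP z_inj : #|[set z i | i : 'I_h]| == #|'I_h| by rewrite card_z card_ord.
  exact: z_inj.
split.
- by apply: inj_im; have := card_im p; have := card_im q; lia.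
- by apply: inj_im; have := card_im p; have := card_im q; lia.
- move=> a b; apply/eqP => e.
  have : p a \in [set p i | i : 'I_h] :&: [set q i | i : 'I_h].
    by rewrite inE; apply/andP; split; apply/imsetP; [exists a | exists b].
  by rewrite pq_disj inE.
- move=> u; have : u \in [set p i | i : 'I_h] :|: [set q i | i : 'I_h] by rewrite pq_cover inE.
  by rewrite inE => /orP [] /imsetP [a _ ->]; [left|right]; exists a.
Qed.

Lemma sum_nat_eq_mul (T : finType) (f : T -> F) (u0 : T) :
  \sum_u (u == u0)%:R * f u = f u0.
Proof.
rewrite (bigD1 u0) //= eqxx mul1r big1 ?addr0 // => u /negbTE->.
by rewrite mul0r.
Qed.

(* The matrix sending e_(p b) to c b (e_(q b) + al e_(p b)) and e_(q b) to
   - al c b e_(q b); A_Z(lambda) and A_Z'(lambda) are of this form. *)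
Definition matching_mx al c p q : 'M[F]_n :=
  \matrix_(u, w) \sum_b c b * ((u == p b)%:R * (w == q b)%:R
     + al * (u == p b)%:R * (w == p b)%:R - al * (u == q b)%:R * (w == q b)%:R).

Lemma trmx_matching_mx al c p q :
  (matching_mx al c p q)^T = matching_mx (- al) c q p.
Proof. by apply/matrixP => u w; rewrite !mxE; apply: eq_bigr => b _; ring. Qed.

Section Rows.
Variables (al : F) (c : 'I_h -> F) (p q : 'I_h -> 'I_n).
Hypothesis pq : matching p q.
Local Notation M := (matching_mx al c p q).

Lemma matching_mx_rowl a w :
  M (p a) w = c a * ((w == q a)%:R + al * (w == p a)%:R).
Proof.
rewrite mxE -(sum_nat_eq_mul (fun b => c b * ((w == q b)%:R + al * (w == p b)%:R)) a).
apply: eq_bigr => b _; rewrite (inj_eq (matching_injl pq)) (negbTE (matching_disj pq a b)).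
by rewrite [(b == a)]eq_sym; case: (a == b) => /=; ring.
Qed.

Lemma matching_mx_rowr a w : M (q a) w = - al * c a * (w == q a)%:R.
Proof.
rewrite mxE -(sum_nat_eq_mul (fun b => - al * c b * (w == q b)%:R) a).
apply: eq_bigr => b _; rewrite (inj_eq (matching_injr pq)) eq_sym.
rewrite (negbTE (matching_disj pq b a)) [(b == a)]eq_sym.
by case: (a == b) => /=; ring.
Qed.

Lemma mul_uvec_matching_mxl a :
  uvec F (p a) *m M = c a *: (uvec F (q a) + al *: uvec F (p a)).
Proof. by apply/rowP => w; rewrite -rowE mxE matching_mx_rowl !mxE. Qed.

Lemma mul_uvec_matching_mxr a : uvec F (q a) *m M = (- al * c a) *: uvec F (q a).
Proof. by apply/rowP => w; rewrite -rowE mxE matching_mx_rowr !mxE. Qed.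

End Rows.

Section Columns.
Variables (al : F) (c : 'I_h -> F) (p q : 'I_h -> 'I_n).
Hypothesis pq : matching p q.
Local Notation M := (matching_mx al c p q).

Lemma mul_row_matching_mxl (v : 'rV[F]_n) a : (v *m M) 0 (p a) = al * c a * v 0 (p a).
Proof.
rewrite mxE -(sum_nat_eq_mul (fun u => al * c a * v 0 u)); apply: eq_bigr => u _.
have -> : M u (p a) = matching_mx (- al) c q p (p a) u.
  by rewrite -trmx_matching_mx [RHS]mxE.
by rewrite matching_mx_rowr ?opprK; [ring | exact: matching_sym].
Qed.

Lemma mul_row_matching_mxr (v : 'rV[F]_n) a :
  (v *m M) 0 (q a) = c a * (v 0 (p a) - al * v 0 (q a)).
Proof.
transitivity (\sum_u ((u == p a)%:R * (c a * v 0 u) - (u == q a)%:R * (al * c a * v 0 u))).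
  rewrite mxE; apply: eq_bigr => u _.
  have -> : M u (q a) = matching_mx (- al) c q p (q a) u.
    by rewrite -trmx_matching_mx [RHS]mxE.
  by rewrite matching_mx_rowl; [ring | exact: matching_sym].
by rewrite sumrB !sum_nat_eq_mul; ring.
Qed.

End Columns.

Local Notation im z := [set z j | j : 'I_h].

Lemma mem_im (z : 'I_h -> 'I_n) a : z a \in im z.
Proof. by apply/imsetP; exists a. Qed.

Lemma edges_in_classesP p q r s : edges_in_classes p q r s -> forall a,
  (exists j t, p a = r j /\ q a = r t) \/ (exists j t, p a = s j /\ q a = s t).
Proof.
move=> pq_rs a.
by case: (pq_rs a) => -[/imsetP [j _ ->] /imsetP [t _ ->]]; [left | right]; exists j, t.
Qed.

Lemma mem_im_disjl p q b : matching p q -> (p b \in im q) = false.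
Proof.
by move=> pq; apply/negbTE/imsetP => -[a _ e]; move: (matching_disj pq b a); rewrite e eqxx.
Qed.

Lemma mem_im_disjr p q b : matching p q -> (q b \in im p) = false.
Proof. by move/matching_sym; apply: mem_im_disjl. Qed.

Lemma edges_in_classes_sym p q r s :
  edges_in_classes p q r s -> edges_in_classes q p r s.
Proof. by move=> pq_rs a; case: (pq_rs a) => -[pa qa]; [left | right]. Qed.

Lemma edges_in_classes_mem p q r s : matching r s -> edges_in_classes p q r s ->
  forall a, (p a \in im r) = (q a \in im r) /\ (p a \in im s) = (q a \in im s).
Proof.
move=> rs /edges_in_classesP pq_rs a.
case: (pq_rs a) => -[j [t [-> ->]]].
  by rewrite !mem_im !(mem_im_disjl _ rs).
by rewrite !mem_im !(mem_im_disjr _ rs).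
Qed.

Lemma row_SZ z a : row a (SZ F z) = uvec F (z a).
Proof. by rewrite rowK. Qed.

Lemma uvec_sub_SZ z a : (uvec F (z a) <= SZ F z)%MS.
Proof. by rewrite -row_SZ row_sub. Qed.

Lemma rank_SZ z : injective z -> \rank (SZ F z) = h.
Proof.
move=> z_inj; apply/eqP; rewrite eqn_leq rank_leq_row /=.
have SZ_orth : SZ F z *m (SZ F z)^T = 1%:M.
  apply/matrixP => i j; rewrite !mxE.
  under eq_bigr => u _ do rewrite !mxE.
  rewrite (eq_bigr (fun u => (u == z i)%:R * (u == z j)%:R)) => [|u _]; last by rewrite eqxx.
  by rewrite sum_nat_eq_mul (inj_eq z_inj).
by rewrite -{1}(mxrank1 F h) -SZ_orth mxrankM_maxl.
Qed.

Section Properties.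
Variables (al : F) (c : 'I_h -> F) (p q : 'I_h -> 'I_n).
Hypotheses (pq : matching p q) (c_neq0 : forall a, c a != 0).
Local Notation M := (matching_mx al c p q).

Lemma matching_mx_unit : al != 0 -> M \in unitmx.
Proof.
move=> al0; apply: row_inj_unitmx => v vM0.
have vp a : v 0 (p a) = 0.
  have := esym (mul_row_matching_mxl al c pq v a).
  by apply: (mul_eq0_cancel (mulf_neq0 al0 (c_neq0 a))); rewrite vM0 mxE; ring.
have vq a : v 0 (q a) = 0.
  have := mul_row_matching_mxr al c pq v a.
  by apply: (mul_eq0_cancel (mulf_neq0 (c_neq0 a) al0)); rewrite vM0 vp mxE; ring.
exact: matching_rowP pq vp vq.
Qed.

Lemma matching_mx_span : (SZ F p + SZ F p *m M == 1%:M)%MS.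
Proof.
rewrite submx1 /=; apply/row_subP => u; rewrite row1.
have Sp a : (uvec F (p a) <= SZ F p + SZ F p *m M)%MS.
  exact: submx_trans (uvec_sub_SZ p a) (addsmxSl _ _).
apply: (matching_ind (P := fun u => (delta_mx 0 u <= _)%MS) pq) => // a.
have -> : delta_mx 0 (q a) = (c a)^-1 *: (uvec F (p a) *m M) - al *: uvec F (p a).
  by rewrite mul_uvec_matching_mxl // scalerA mulVf // scale1r addrK.
apply: addmx_sub; last by rewrite eqmx_opp scalemx_sub.
apply/scalemx_sub/(submx_trans _ (addsmxSr _ _))/submxMr; exact: uvec_sub_SZ.
Qed.

Lemma matching_mx_stable z : al != 0 ->
  (forall b, p b \in im z -> q b \in im z) -> (SZ F z *m M == SZ F z)%MS.
Proof.
move=> al0 pq_z.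
have SzM_sub : (SZ F z *m M <= SZ F z)%MS.
  apply/row_subP => a; rewrite row_mul row_SZ.
  case: (matching_cover pq (z a)) => -[b zab]; rewrite -zab.
  - rewrite mul_uvec_matching_mxl //; apply/scalemx_sub/addmx_sub.
      have /imsetP [j _ ->] : q b \in im z by apply: pq_z; rewrite zab mem_im.
      exact: uvec_sub_SZ.
    by apply: scalemx_sub; rewrite zab uvec_sub_SZ.
  - by rewrite mul_uvec_matching_mxr //; apply: scalemx_sub; rewrite zab uvec_sub_SZ.
rewrite SzM_sub -(mxrank_leqif_sup SzM_sub).2 mxrankMfree ?eqxx //.
by rewrite row_free_unit matching_mx_unit.
Qed.

Lemma tr_matching_mx_sub_unit : M^T - M \in unitmx.
Proof.
apply: row_inj_unitmx => v; rewrite mulmxBr => /eqP; rewrite subr_eq0 => /eqP vMM.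
have E u : (v *m M^T) 0 u = (v *m M) 0 u by rewrite vMM.
have qp := matching_sym pq.
have vp a : v 0 (p a) = 0.
  apply: (mul_eq0_cancel (c_neq0 a) _ (esym (E (q a)))).
  by rewrite trmx_matching_mx mul_row_matching_mxl // mul_row_matching_mxr //; ring.
have vq a : v 0 (q a) = 0.
  apply: (mul_eq0_cancel (c_neq0 a) _ (E (p a))).
  by rewrite trmx_matching_mx mul_row_matching_mxl // mul_row_matching_mxr // vp; ring.
exact: matching_rowP pq vp vq.
Qed.

End Properties.

(* In the columns r j, matching_mx (-1) d r s only involves the coordinate r j
   itself, so each edge of (p, q) inside the r-class gives a triangular 2x2
   system; once v vanishes on the r-class, so do the edges inside the
   s-class. *)
Lemma matching_mx_sub_unit al c d p q r s :
  matching p q -> matching r s -> edges_in_classes p q r s ->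
  (forall a j t, p a = r j -> q a = r t ->
     al * c a + d j != 0 /\ al * c a - d t != 0) ->
  (forall a j t, p a = s j -> q a = s t ->
     al * c a - d j != 0 /\ al * c a + d t != 0) ->
  matching_mx (-1) d r s - matching_mx al c p q \in unitmx.
Proof.
move=> pq rs /edges_in_classesP pq_rs sep_r sep_s.
apply: row_inj_unitmx => v; rewrite mulmxBr => /eqP; rewrite subr_eq0 => /eqP vNM.
have E u u' : u = u' ->
    (v *m matching_mx (-1) d r s) 0 u = (v *m matching_mx al c p q) 0 u'.
  by move=> ->; rewrite vNM.
have v_r_edge a j t : p a = r j -> q a = r t -> v 0 (p a) = 0 /\ v 0 (q a) = 0.
  move=> pr qr; have [sep_j sep_t] := sep_r a j t pr qr.
  have := E _ _ (esym pr); have := E _ _ (esym qr).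
  rewrite !mul_row_matching_mxl ?mul_row_matching_mxr // -pr -qr => Eq Ep.
  have vp : v 0 (p a) = 0 by apply: (mul_eq0_cancel sep_j _ (esym Ep)); ring.
  by split=> //; apply: (mul_eq0_cancel sep_t _ Eq); rewrite vp; ring.
have v_r j : v 0 (r j) = 0.
  case: (matching_cover pq (r j)) => -[a e]; rewrite -e;
    case: (pq_rs a) => -[j' [t [pa qa]]];
    try by have [] := v_r_edge a j' t pa qa.
  - by move: (matching_disj rs j j'); rewrite -pa e eqxx.
  - by move: (matching_disj rs j t); rewrite -qa e eqxx.
have v_edge a : v 0 (p a) = 0 /\ v 0 (q a) = 0.
  case: (pq_rs a) => -[j [t [ps qs]]]; first exact: v_r_edge ps qs.
  have [sep_j sep_t] := sep_s a j t ps qs.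
  have := E _ _ (esym ps); have := E _ _ (esym qs).
  rewrite !mul_row_matching_mxl ?mul_row_matching_mxr // !v_r -ps -qs => Eq Ep.
  have vp : v 0 (p a) = 0 by apply: (mul_eq0_cancel sep_j _ (esym Ep)); ring.
  by split=> //; apply: (mul_eq0_cancel sep_t _ Eq); rewrite vp; ring.
by apply: (matching_rowP pq) => a; case: (v_edge a).
Qed.
Section Pairing.
Variables (x x' y y' : 'I_h -> 'I_n) (cx cy : 'I_h -> F).
Hypotheses (xx' : matching x x') (yy' : matching y y').
Hypotheses (cx_neq0 : forall a, cx a != 0) (cy_neq0 : forall a, cy a != 0).
Hypotheses (xy : edges_in_classes x x' y y') (yx : edges_in_classes y y' x x').
Hypothesis sep_y : forall a j t, x a = y j -> x' a = y t ->
  cx a != cy j /\ cx a != - cy t.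
Hypothesis sep_y' : forall a j t, x a = y' j -> x' a = y' t ->
  cx a != - cy j /\ cx a != cy t.
Local Notation Ax := (matching_mx (-1) cx x x').
Local Notation Ay := (matching_mx (-1) cy y y').

Lemma pairing_sub_unit : Ay - Ax \in unitmx /\ Ay - Ax^T \in unitmx.
Proof.
have addN1 (u v : F) : (-1 * u + v != 0) = (u != v).
  by rewrite mulN1r addrC subr_eq0 eq_sym.
have subN1 (u v : F) : (-1 * u - v != 0) = (u != - v).
  by rewrite mulN1r -opprD oppr_eq0 addr_eq0.
split; last rewrite trmx_matching_mx opprK.
- apply: matching_mx_sub_unit => // a j t pr qr.
    by rewrite subN1 addN1; apply: sep_y.
  by rewrite subN1 addN1; apply: sep_y'.
- apply: matching_mx_sub_unit => //.
  + exact: matching_sym.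
  + exact: edges_in_classes_sym.
  + by move=> a j t pr qr; rewrite mul1r subr_eq0 addr_eq0; case: (sep_y qr pr) => -> ->.
  + by move=> a j t ps qs; rewrite mul1r subr_eq0 addr_eq0; case: (sep_y' qs ps) => -> ->.
Qed.

Lemma pairing_subspace_condition :
  subspace_condition 2 (fun k : 'I_4 => nth 0 [:: Ax; Ax^T; Ay; Ay^T] k)
    (fun k : 'I_4 => nth 0 [:: SZ F x; SZ F x'; SZ F y; SZ F y'] k).
Proof.
have [x'x y'y] := (matching_sym xx', matching_sym yy').
have [Ay_Ax Ay_AxT] := pairing_sub_unit.
have im_x b := edges_in_classes_mem xx' yx b.
have im_y b := edges_in_classes_mem yy' xy b.
apply: subspace_condition2.
- by case=> [[|[|[|[|k]]]] ?] //=; rewrite ?unitmx_tr matching_mx_unit // oppr_eq0 oner_eq0.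
- case=> [[|[|[|[|k]]]] ?] //=; rewrite rank_SZ ?addnn -?muln2 ?mulnK //;
    by case: xx' yy' => [? ? _ _] [? ? _ _].
- by case=> [[|[|[|[|k]]]] ?] //=; rewrite ?trmx_matching_mx ?opprK matching_mx_span.
- case=> [[|[|[|[|i]]]] ?] //; case=> [[|[|[|[|j]]]] ?] //= _;
    rewrite ?trmx_matching_mx ?opprK matching_mx_stable ?oppr_eq0 ?oner_eq0 // => b;
    by rewrite ?(mem_im_disjl _ xx') ?(mem_im_disjr _ xx') ?(mem_im_disjl _ yy')
      ?(mem_im_disjr _ yy') ?(proj1 (im_x b)) ?(proj2 (im_x b)) ?(proj1 (im_y b))
      ?(proj2 (im_y b)).
- case=> [[|[|[|[|i]]]] ?] //; case=> [[|[|[|[|j]]]] ?] //= _;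
    rewrite ?tr_matching_mx_sub_unit //.
  + by rewrite -[Ax]trmxK -raddfB unitmx_tr.
  + by rewrite -raddfB unitmx_tr.
Qed.

End Pairing.

End MatchingMatrix.

Lemma half_eq_neq (k l : nat) :
  ((k./2 == l./2) && (k != l))%N = (l == if odd k then k.-1 else k.+1)%N.
Proof.
rewrite -[k]odd_double_half -[l]odd_double_half !half_bit_double oddD odd_double addbF.
by case: (odd k) (odd l) => [] [] /=; apply/idP/idP; lia.
Qed.

Section Conjugation.
Variables (F : fieldType) (m : nat).
Local Notation h := (2 * m)%N.
Local Notation n := (h + h)%N.
Implicit Types (p q : 'I_h -> 'I_n) (al lam : F).

Definition edge_weight lam (a : 'I_h) : F := if (a < m)%N then lam else - lam.

Lemma partner_lt (k : 'I_n) : ((if odd k then k.-1 else k.+1) < n)%N.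
Proof.
case: ifP (ltn_ord k) => k_odd k_lt; first lia.
rewrite ltn_neqAle k_lt andbT; apply/eqP => e.
have : odd k.+1 by rewrite /= k_odd.
by rewrite e oddD !oddM.
Qed.

(* The other index of the 2x2 diagonal block of A(lambda) containing k. *)
Definition partner (k : 'I_n) : 'I_n := Ordinal (partner_lt k).

Lemma half_partner k : half_ord (partner k) = half_ord k.
Proof.
by apply/val_inj => /=; move: (half_eq_neq k (partner k)); rewrite eqxx => /andP [/eqP].
Qed.

Lemma odd_partner k : odd (partner k) = ~~ odd k.
Proof.
rewrite /=; case: ifP => k_odd /=; last by rewrite k_odd.
by move: (nat_of_ord k) k_odd => [|k'] //= /negbTE ->.
Qed.

Lemma half_addn_double k : ((h + k)./2 = m + k./2)%N.
Proof. by rewrite halfD mul2n odd_double doubleK. Qed.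

Lemma Amat_entry lam (k l : 'I_n) : Amat h lam k l =
  if ((k./2 == l./2) && (k != l :> nat))%N then (if (k < h)%N then lam else - lam) else 0.
Proof.
have half_lt (k' : 'I_h) : (k'./2 < m)%N by rewrite ltn_half_double -mul2n.
rewrite /Amat; case: (splitP k) => [k' ek|k' ek];
  [have -> : k = lshift h k' by apply/val_inj | have -> : k = rshift h k' by apply/val_inj];
  (case: (splitP l) => [l' el|l' el];
  [have -> : l = lshift h l' by apply/val_inj | have -> : l = rshift h l' by apply/val_inj]).
- by rewrite block_mxEul mxE.
- rewrite block_mxEur mxE /= half_addn_double.
  by case: ifP => // /andP [/eqP e]; have := half_lt k'; lia.
- rewrite block_mxEdl mxE /= half_addn_double.
  by case: ifP => // /andP [/eqP e]; have := half_lt l'; lia.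
- rewrite block_mxEdr !mxE /= !half_addn_double !eqn_add2l.
  by case: ifP; rewrite ?oppr0.
Qed.

Lemma Amat_row lam (k : 'I_n) :
  row k (Amat h lam) = edge_weight lam (half_ord k) *: uvec F (partner k).
Proof.
apply/rowP => l; rewrite mxE Amat_entry !mxE half_eq_neq /edge_weight /=.
rewrite ltn_half_double -mul2n -[l == partner k]val_eqE /=.
by case: (_ == _); rewrite ?mulr1 ?mulr0.
Qed.

Definition edge_basis al p q : 'M[F]_n := \matrix_(k < n)
  (if odd k then uvec F (q (half_ord k)) + al *: uvec F (p (half_ord k))
   else uvec F (p (half_ord k))).

Lemma PZ_edge_basis z z' : PZ F z z' = edge_basis (-1) z z'.
Proof. by apply/row_matrixP => k; rewrite !rowK scaleN1r. Qed.

Lemma PZ'_edge_basis z z' : PZ' F z z' = edge_basis 1 z' z.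
Proof. by apply/row_matrixP => k; rewrite !rowK scale1r. Qed.

Lemma exists_half_odd (a : 'I_h) (b : bool) :
  exists k : 'I_n, half_ord k = a /\ odd k = b.
Proof.
have k_lt : (b + a.*2 < n)%N by have := ltn_ord a; rewrite -!mul2n; case: b => /=; lia.
exists (Ordinal k_lt); split; first by apply/val_inj; rewrite /= half_bit_double.
by change (odd (b + a.*2) = b); rewrite oddD odd_double addbF oddb.
Qed.

Lemma edge_basis_unit al p q : matching p q -> edge_basis al p q \in unitmx.
Proof.
move=> pq; rewrite -row_full_unit -sub1mx; apply/row_subP => u; rewrite row1.
apply: (matching_ind (P := fun u => (delta_mx 0 u <= _)%MS) pq) => a;
  have [k0 [k0_half k0_even]] := exists_half_odd a false;
  have := row_sub k0 (edge_basis al p q); rewrite rowK k0_half k0_even // => p_sub.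
have [k1 [k1_half k1_odd]] := exists_half_odd a true.
have -> : delta_mx 0 (q a) = row k1 (edge_basis al p q) - al *: uvec F (p a).
  by rewrite rowK k1_half k1_odd addrK.
by apply: addmx_sub; [exact: row_sub | rewrite eqmx_opp scalemx_sub].
Qed.

(* On an odd row, e_(q a) + al e_(p a) is sent to al^2 c_a e_(p a), whence
   al * al = 1. *)
Lemma edge_basis_conj al lam p q : matching p q -> al * al = 1 ->
  edge_basis al p q *m matching_mx al (edge_weight lam) p q =
  Amat h lam *m edge_basis al p q.
Proof.
move=> pq al2; apply/row_matrixP => k.
rewrite !row_mul Amat_row -scalemxAl -rowE !rowK odd_partner half_partner.
case: (odd k) => /=; last by rewrite mul_uvec_matching_mxl.
rewrite mulmxDl -scalemxAl mul_uvec_matching_mxl // mul_uvec_matching_mxr //.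
rewrite scalerA scalerDr addrA -scalerDl mulNr addNr scale0r add0r scalerA.
by rewrite mulrAC al2 mul1r.
Qed.

Lemma AZ_matching_mx lam z z' : matching z z' ->
  AZ lam z z' = matching_mx (-1) (edge_weight lam) z z'.
Proof.
move=> zz'; rewrite /AZ PZ_edge_basis -mulmxA -edge_basis_conj ?mulrNN ?mulr1 //.
by rewrite mulKmx // edge_basis_unit.
Qed.

Lemma AZ'_matching_mx lam z z' : matching z z' ->
  AZ' lam z z' = (matching_mx (-1) (edge_weight lam) z z')^T.
Proof.
move=> /matching_sym zz'; rewrite trmx_matching_mx opprK /AZ' PZ'_edge_basis.
by rewrite -mulmxA -edge_basis_conj ?mulr1 // mulKmx // edge_basis_unit.
Qed.

Lemma edge_weight_neq0 lam a : lam != 0 -> edge_weight lam a != 0.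
Proof. by rewrite /edge_weight; case: ifP; rewrite ?oppr_eq0. Qed.

Lemma edge_weight_eq lx ly a j : (edge_weight lx a == edge_weight ly j) =
  if (a < m)%N == (j < m)%N then lx == ly else lx == - ly.
Proof.
by rewrite /edge_weight; case: (a < m)%N; case: (j < m)%N; rewrite /= ?eqr_opp ?eqr_oppLR.
Qed.

Lemma edge_weight_eqN lx ly a j : (edge_weight lx a == - edge_weight ly j) =
  if (a < m)%N == (j < m)%N then lx == - ly else lx == ly.
Proof.
rewrite /edge_weight; case: (a < m)%N; case: (j < m)%N;
  by rewrite /= ?eqr_opp ?eqr_oppLR ?opprK.
Qed.

(* Hypotheses (B1) and (B3) of the theorem are exactly what keeps the weights
   of an x-edge apart from those of the y-edges it meets. *)
Lemma edge_weights_separated lx ly (x x' y y' : 'I_h -> 'I_n) : lx != ly ->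
  (lx = - ly -> forall i : 'I_h,
     (forall j t : 'I_h, x i = y j -> x' i = y t ->
        [/\ (i < m)%N, (j < m)%N & (m <= t)%N]) /\
     (forall j t : 'I_h, x i = y' j -> x' i = y' t ->
        [/\ (m <= i)%N, (j < m)%N & (m <= t)%N])) ->
  (forall a j t, x a = y j -> x' a = y t ->
     edge_weight lx a != edge_weight ly j /\ edge_weight lx a != - edge_weight ly t) /\
  (forall a j t, x a = y' j -> x' a = y' t ->
     edge_weight lx a != - edge_weight ly j /\ edge_weight lx a != edge_weight ly t).
Proof.
move=> lxy B3; split=> a j t xa x'a;
  rewrite edge_weight_eq edge_weight_eqN (negbTE lxy);
  have [/B3/(_ a) [B3y B3y'] | _] := eqVneq lx (- ly); rewrite ?if_same //.
- by case: (B3y j t xa x'a) => -> -> t_ge; rewrite ltnNge t_ge.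
- by case: (B3y' j t xa x'a) => a_ge -> t_ge; rewrite !ltnNge a_ge t_ge.
Qed.

End Conjugation.

Theorem lemma4p5 (F : finFieldType) (m : nat)
    (x x' y y' : 'I_(2 * m) -> 'I_(2 * m + 2 * m)) (lx ly : F) :
  perfect_colored_matching x x' ->
  perfect_colored_matching y y' ->
  lx != 0 -> ly != 0 ->
  (* (B1) *) lx != ly ->
  (* (B2) *) pairing_condition x x' y y' ->
  (* (B3) *)
  (lx = - ly ->
   forall i : 'I_(2 * m),
     (forall j t : 'I_(2 * m), x i = y j -> x' i = y t ->
        [/\ (i < m)%N, (j < m)%N & (m <= t)%N]) /\
     (forall j t : 'I_(2 * m), x i = y' j -> x' i = y' t ->
        [/\ (m <= i)%N, (j < m)%N & (m <= t)%N])) ->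
  subspace_condition 2
    (fun k : 'I_4 => nth 0 [:: AZ lx x x'; AZ' lx x x'; AZ ly y y'; AZ' ly y y'] k)
    (fun k : 'I_4 => nth 0 [:: SZ F x; SZ F x'; SZ F y; SZ F y'] k).
Proof.
move=> /perfect_colored_matching_matching xx' /perfect_colored_matching_matching yy'.
move=> lx0 ly0 lxy [xy yx] B3.
have [sep_y sep_y'] := edge_weights_separated lxy B3.
rewrite (AZ_matching_mx _ xx') (AZ'_matching_mx _ xx').
rewrite (AZ_matching_mx _ yy') (AZ'_matching_mx _ yy').
apply: pairing_subspace_condition => // a; exact: edge_weight_neq0.
Qed.
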